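(* Let $(\Phi,D)$ and $(\Psi,E)$ be domain-free continuous information algebras, let $f,g\in[\Phi\rightarrow\Psi]_c$ and $(x,y)\in D\times E$. Then $f\otimes g\in[\Phi\rightarrow\Psi]_c$. Moreover, if $(\Phi,D)$ and $(\Psi,E)$ are s-continuous, then $f^{\Rightarrow(x,y)}\in[\Phi\rightarrow\Psi]_c$.
   Context: A domain-free information algebra $(\Phi,D)$ consists of a set $\Phi$, a lattice $D$, a combination $\otimes$ and a focusing $(\psi,x)\mapsto\psi^{\Rightarrow x}$ ($x\in D$) such that: $\otimes$ is associative, commutative with neutral element $e$; $(\psi^{\Rightarrow y})^{\Rightarrow x}=\psi^{\Rightarrow x\wedge y}$; $(\phi^{\Rightarrow x}\otimes\psi)^{\Rightarrow x}=\phi^{\Rightarrow x}\otimes\psi^{\Rightarrow x}$; every $\psi$ has some $x$ with $\psi^{\Rightarrow x}=\psi$; $\psi\otimes\psi^{\Rightarrow x}=\psi$. Order: $\psi\le\phi$ iff $\psi\otimes\phi=\phi$; suprema refer to this order. $a\ll b$ means: for every directed $X$ with $b\le\vee X$ there is $c\in X$ with $a\le c$. $(\Phi,D)$, with $D$ having a top element, is continuous (resp. s-continuous) if there exists $\Gamma\subseteq\Phi$, closed under combination and containing $e$, such that every directed subset of $\Gamma$ has a supremum in $\Phi$ and $\phi=\vee\{\psi\in\Gamma:\psi\ll\phi\}$ for all $\phi$ (resp. $\phi^{\Rightarrow x}=\vee\{\psi\in\Gamma:\psi=\psi^{\Rightarrow x}\ll\phi\}$ for all $\phi,x$). For continuous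 $(\Phi,D)$, $(\Psi,E)$, $[\Phi\rightarrow\Psi]_c$ is the set of maps $f:\Phi\to\Psi$ with $f(\vee X)=\vee f(X)$ for every directed $X\subseteq\Phi$. For $f,g\in[\Phi\rightarrow\Psi]_c$ and $(x,y)\in D\times E$ define $(f\otimes g)(\phi)=f(\phi)\otimes g(\phi)$ and $f^{\Rightarrow(x,y)}(\phi)=(f(\phi^{\Rightarrow x}))^{\Rightarrow y}$. *)

From HB Require Import structures.
From mathcomp Require Import all_boot all_order.

Set Implicit Arguments.
Unset Strict Implicit.
Unset Printing Implicit Defensive.

Record infoAlg (disp : Order.disp_t) (D : latticeType disp) := InfoAlg {
  ia_car :> Type;
  ia_comb : ia_car -> ia_car -> ia_car;
  ia_e : ia_car;
  ia_focus : ia_car -> D -> ia_car;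
  ia_combA : forall a b c, ia_comb a (ia_comb b c) = ia_comb (ia_comb a b) c;
  ia_combC : forall a b, ia_comb a b = ia_comb b a;
  ia_comb_e : forall a, ia_comb a ia_e = a;
  ia_transitivity : forall psi x y,
      ia_focus (ia_focus psi y) x = ia_focus psi (Order.meet x y);
  ia_combination : forall phi psi x,
      ia_focus (ia_comb (ia_focus phi x) psi) x
      = ia_comb (ia_focus phi x) (ia_focus psi x);
  ia_support : forall psi, exists x, ia_focus psi x = psi;
  ia_idempotency : forall psi x, ia_comb psi (ia_focus psi x) = psi
}.

Section Order.
Variables (disp : Order.disp_t) (D : latticeType disp) (A : infoAlg D).

Definition ia_le (a b : A) : Prop := ia_comb a b = b.

Definition is_sup (X : A -> Prop) (s : A) : Prop :=
  (forall a, X a -> ia_le a s) /\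
  (forall u, (forall a, X a -> ia_le a u) -> ia_le s u).

Definition directed (X : A -> Prop) : Prop :=
  (exists a, X a) /\
  (forall a b, X a -> X b -> exists c, [/\ X c, ia_le a c & ia_le b c]).

Definition way_below (a b : A) : Prop :=
  forall X, directed X ->
    (exists s, is_sup X s /\ ia_le b s) -> exists2 c, X c & ia_le a c.

Definition basis_ok (G : A -> Prop) : Prop :=
  [/\ G (ia_e A),
      (forall a b, G a -> G b -> G (ia_comb a b)) &
      (forall X, (forall a, X a -> G a) -> directed X -> exists s, is_sup X s)].

Definition continuous_ia : Prop :=
  exists G : A -> Prop, basis_ok G /\
    forall phi, is_sup (fun psi => G psi /\ way_below psi phi) phi.

Definition s_continuous_ia : Prop :=
  exists G : A -> Prop, basis_ok G /\
    forall phi x, is_sup (fun psi => [/\ G psi, ia_focus psi x = psi &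
                                              way_below psi phi])
                         (ia_focus phi x).
End Order.

Definition cont_map (d1 d2 : Order.disp_t) (D : latticeType d1)
  (E : latticeType d2) (P : infoAlg D) (Q : infoAlg E) (f : P -> Q) : Prop :=
  forall X : P -> Prop, directed X -> forall s, is_sup X s ->
    is_sup (fun b : Q => exists2 a, X a & b = f a) (f s).

Definition map_comb (d1 d2 : Order.disp_t) (D : latticeType d1)
  (E : latticeType d2) (P : infoAlg D) (Q : infoAlg E) (f g : P -> Q) : P -> Q :=
  fun phi => ia_comb (f phi) (g phi).

Definition map_focus (d1 d2 : Order.disp_t) (D : latticeType d1)
  (E : latticeType d2) (P : infoAlg D) (Q : infoAlg E) (f : P -> Q)
  (x : D) (y : E) : P -> Q :=
  fun phi => ia_focus (f (ia_focus phi x)) y.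

(** Combination of two continuous maps is continuous because the order on an
    information algebra is the one induced by combination, so [a (x) b] is the
    least upper bound of [a] and [b] and suprema of pointwise combinations
    split.  For focusing, s-continuity says that [psi |-> psi^{=> x}] is itself
    continuous: every basis element below [phi^{=> x}] is [x]-supported and way
    below [phi], hence below some focused element of any directed family with
    supremum [phi].  Then [f^{=> (x, y)}] is a composite of three continuous
    maps. *)
From mathcomp Require Import all_boot all_order.

Set Implicit Arguments.
Unset Strict Implicit.
Unset Printing Implicit Defensive.

Definition imagep (T U : Type) (f : T -> U) (X : T -> Prop) : U -> Prop :=
  fun b => exists2 a, X a & b = f a.

Lemma imagep_comp (T U V : Type) (f : T -> U) (g : U -> V) (X : T -> Prop) c :
  imagep g (imagep f X) c <-> imagep (g \o f) X c.
Proof.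
split; first by move=> [_ [a Xa ->] ->]; exists a.
by move=> [a Xa ->]; exists (f a) => //; exists a.
Qed.

Section InfoOrder.
Variables (disp : Order.disp_t) (D : latticeType disp) (A : infoAlg D).
Implicit Types a b c u : A.

Lemma ia_le_refl a : ia_le a a.
Proof.
have [x ax] := ia_support a.
by rewrite /ia_le -{2 3}ax ia_idempotency ax.
Qed.

Lemma ia_le_trans b a c : ia_le a b -> ia_le b c -> ia_le a c.
Proof. by rewrite /ia_le => ab bc; rewrite -bc ia_combA ab. Qed.

Lemma ia_le_combl a b : ia_le a (ia_comb a b).
Proof. by rewrite /ia_le ia_combA ia_le_refl. Qed.

Lemma ia_le_combr a b : ia_le b (ia_comb a b).
Proof. by rewrite ia_combC; apply: ia_le_combl. Qed.

Lemma ia_comb_lub a b u : ia_le a u -> ia_le b u -> ia_le (ia_comb a b) u.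
Proof. by rewrite /ia_le => au bu; rewrite -ia_combA bu au. Qed.

Lemma ia_le_comb a b c u :
  ia_le a c -> ia_le b u -> ia_le (ia_comb a b) (ia_comb c u).
Proof.
move=> ac bu; apply: ia_comb_lub.
  exact: ia_le_trans ac (ia_le_combl _ _).
exact: ia_le_trans bu (ia_le_combr _ _).
Qed.

Lemma ia_focus_le a x : ia_le (ia_focus a x) a.
Proof. by rewrite /ia_le ia_combC ia_idempotency. Qed.

Lemma ia_focus_mono x a b : ia_le a b -> ia_le (ia_focus a x) (ia_focus b x).
Proof.
move=> ab; have ax_b : ia_comb (ia_focus a x) b = b.
  exact: ia_le_trans (ia_focus_le a x) ab.
by rewrite /ia_le -ia_combination ax_b.
Qed.

Lemma is_sup_ext (X Y : A -> Prop) s :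
  (forall a, X a <-> Y a) -> is_sup X s -> is_sup Y s.
Proof.
move=> XY [ub least]; split; first by move=> a /XY; apply: ub.
by move=> u Yu; apply: least => a /XY; apply: Yu.
Qed.

End InfoOrder.

Section ContinuousMaps.
Variables (d1 d2 d3 : Order.disp_t).
Variables (D1 : latticeType d1) (D2 : latticeType d2) (D3 : latticeType d3).
Variables (P : infoAlg D1) (Q : infoAlg D2) (R : infoAlg D3).

Lemma directed_imagep (f : P -> Q) (X : P -> Prop) :
  (forall a b, ia_le a b -> ia_le (f a) (f b)) ->
  directed X -> directed (imagep f X).
Proof.
move=> f_mono [[a Xa] dirX]; split; first by exists (f a), a.
move=> _ _ [a1 Xa1 ->] [a2 Xa2 ->].
have [c [Xc a1c a2c]] := dirX _ _ Xa1 Xa2.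
by exists (f c); split; [exists c | apply: f_mono | apply: f_mono].
Qed.

(* Apply continuity to the directed pair [{a, b}], whose supremum is [b]. *)
Lemma cont_map_mono (f : P -> Q) a b :
  cont_map f -> ia_le a b -> ia_le (f a) (f b).
Proof.
move=> f_cont ab; pose X c := c = a \/ c = b.
have X_le_b c : X c -> ia_le c b by case=> ->; [exact: ab | exact: ia_le_refl].
have dirX : directed X.
  split; first by exists a; left.
  by move=> c1 c2 Xc1 Xc2; exists b; split; [right | apply: X_le_b ..].
have supX : is_sup X b by split=> // u; apply; right.
by have [ub _] := f_cont _ dirX _ supX; apply: ub; exists a; [left |].
Qed.

Lemma cont_map_comp (f : P -> Q) (g : Q -> R) :
  cont_map f -> cont_map g -> cont_map (g \o f).
Proof.
move=> f_cont g_cont X dirX s supX.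
have dir_fX := directed_imagep (fun a b => cont_map_mono f_cont) dirX.
exact: is_sup_ext (imagep_comp f g X) (g_cont _ dir_fX _ (f_cont _ dirX _ supX)).
Qed.

Lemma cont_map_comb (f g : P -> Q) :
  cont_map f -> cont_map g -> cont_map (map_comb f g).
Proof.
move=> f_cont g_cont X dirX s supX.
have [f_ub f_least] := f_cont X dirX s supX.
have [g_ub g_least] := g_cont X dirX s supX.
split=> [_ [a Xa ->] | u ub_u].
  by apply: ia_le_comb; [apply: f_ub | apply: g_ub]; exists a.
have ub_comb a : X a -> ia_le (ia_comb (f a) (g a)) u.
  by move=> Xa; apply: ub_u; exists a.
apply: ia_comb_lub; [apply: f_least | apply: g_least] => _ [a Xa ->].
  exact: ia_le_trans (ia_le_combl _ _) (ub_comb a Xa).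
exact: ia_le_trans (ia_le_combr _ _) (ub_comb a Xa).
Qed.

End ContinuousMaps.

Lemma s_continuous_focus (disp : Order.disp_t) (D : latticeType disp)
    (A : infoAlg D) (x : D) :
  s_continuous_ia A -> cont_map (fun a : A => ia_focus a x).
Proof.
move=> [G [_ approx]] X dirX s [s_ub s_least]; split.
  by move=> _ [a Xa ->]; apply: ia_focus_mono; apply: s_ub.
move=> u ub_u; have [_ sx_least] := approx s x; apply: sx_least.
move=> p [_ px_p p_ll_s].
have [c Xc pc] : exists2 c, X c & ia_le p c.
  by apply: p_ll_s => //; exists s; split; [split | apply: ia_le_refl].
rewrite -px_p; apply: ia_le_trans (ia_focus_mono x pc) _.
by apply: ub_u; exists c.
Qed.

Theorem proposition3p12 (d1 d2 : Order.disp_t)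
  (D : tLatticeType d1) (E : tLatticeType d2)
  (Phi : infoAlg D) (Psi : infoAlg E)
  (f g : Phi -> Psi) (x : D) (y : E) :
  continuous_ia Phi -> continuous_ia Psi ->
  cont_map f -> cont_map g ->
  cont_map (map_comb f g) /\
  (s_continuous_ia Phi -> s_continuous_ia Psi -> cont_map (map_focus f x y)).
Proof.
move=> _ _ f_cont g_cont; split; first exact: cont_map_comb.
move=> sPhi sPsi.
have fx_cont := cont_map_comp (s_continuous_focus x sPhi) f_cont.
exact: cont_map_comp fx_cont (s_continuous_focus y sPsi).
Qed.
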